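(* Let $K$ be a field of characteristic $0$ and $a(t),b(t)\in K[t]$. Assume that $Na'(t)+b(t)$ and $a(t)$ are coprime for every positive integer $N$. Let $n$ be a positive integer and $P(t),Q(t)\in K[t]$ satisfy $Q(t)a(t)^n=L^*\cdot P(t)$. Then $P(t)$ is divisible by $a(t)^n$.
   Context: $L=-a(z)\frac{d}{dz}+b(z)$ and its adjoint $L^*$ acts on $K[t]$ by $L^*\cdot P(t)=\frac{d}{dt}(a(t)P(t))+b(t)P(t)=(a'(t)+b(t))P(t)+a(t)P'(t)$. *)

From mathcomp Require Import all_boot all_order all_algebra.
Set Implicit Arguments. Unset Strict Implicit. Unset Printing Implicit Defensive.
Import GRing.Theory.
Local Open Scope ring_scope.

(* The adjoint L^* of L = -a(z) d/dz + b(z), acting on K[t]: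
   L^* . P = d/dt (a P) + b P. *)
Definition Lstar (K : fieldType) (a b P : {poly K}) : {poly K} :=
  (a * P)^`() + b * P.

(* If a^j divides P, then L^* P = a^j ((j+1) a' + b) R + a^(j+1) R' where P = a^j R.
   When a^(j+1) divides L^* P, a therefore divides ((j+1) a' + b) R, and coprimality
   gives a | R, i.e. a^(j+1) | P; induction on j up to n. *)
From mathcomp Require Import all_boot all_order all_algebra.
From mathcomp Require Import ring.
Import GRing.Theory.
Local Open Scope ring_scope.

Section LstarDivisibility.

Variables (K : fieldType) (a b : {poly K}).

Lemma Lstar_exp_mul (j : nat) (R : {poly K}) :
  Lstar a b (a ^+ j * R) = a ^+ j * ((a^`() *+ j.+1 + b) * R + a * R^`()).
Proof.
by rewrite /Lstar mulrA -exprS derivM deriv_exp /= exprS; ring.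
Qed.

Lemma dvdp_exp_Lstar_step (j : nat) (P : {poly K}) :
  a != 0 -> coprimep (a^`() *+ j.+1 + b) a ->
  a ^+ j %| P -> a ^+ j.+1 %| Lstar a b P -> a ^+ j.+1 %| P.
Proof.
move=> a0 hcop /dvdpP [R ->].
rewrite mulrC Lstar_exp_mul exprS [a * _]mulrC.
rewrite !dvdp_mul2l ?expf_neq0 // addrC (dvdp_addr _ (dvdp_mulr _ (dvdpp a))).
by rewrite Gauss_dvdpr // coprimep_sym.
Qed.

Lemma dvdp_exp_Lstar (n : nat) (P : {poly K}) :
  a != 0 -> (forall N : nat, (0 < N)%N -> coprimep (a^`() *+ N + b) a) ->
  a ^+ n %| Lstar a b P -> a ^+ n %| P.
Proof.
move=> a0 hcop hL.
suff /(_ n (leqnn n)) : forall j, (j <= n)%N -> a ^+ j %| P by [].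
elim=> [|j IH] hj; first by rewrite expr0 dvd1p.
apply: dvdp_exp_Lstar_step => //; first exact: hcop.
  exact/IH/ltnW.
by apply: dvdp_trans hL; rewrite dvdp_exp2l.
Qed.

End LstarDivisibility.

Theorem lemma3p6 (K : fieldType) (a b : {poly K})
  (charK : [pchar K] =i pred0)
  (hcop : forall N : nat, (0 < N)%N -> coprimep (a^`() *+ N + b) a)
  (n : nat) (hn : (0 < n)%N) (P Q : {poly K})
  (hPQ : Q * a ^+ n = Lstar a b P) :
  a ^+ n %| P.
Proof.
have [a0 | a0] := eqVneq a 0; last first.
  by apply: (@dvdp_exp_Lstar _ a b) => //; rewrite -hPQ dvdp_mull.
(* For a = 0 the hypothesis reads b P = 0 with b coprime to 0, i.e. a unit. *)
move: hPQ (hcop 1%N isT).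
rewrite a0 /Lstar mul0r !deriv0 mul0rn !add0r coprimep0 expr0n eqn0Ngt hn mulr0.
move=> /esym /eqP; rewrite mulf_eq0 => /orP [/eqP -> | /eqP ->].
  by rewrite eqp01.
by rewrite dvdp0.
Qed.
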